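(* For every even integer $k\ge 4$, the graph $M_{\rm III}(k)$ is not word-representable.
   Context: For even $k\ge4$, $M_{\rm III}(k)$ is the split graph with clique $C=\{c_1,\dots,c_{k+1}\}$ and independent set $I=\{b,a_1,\dots,a_{k-1}\}$, where $N(b)=\{c_2,\dots,c_{k-1},c_{k+1}\}$ and $N(a_i)=\{c_i,c_{i+1}\}$ for $1\le i\le k-1$. A graph $G=(V,E)$ is word-representable if there is a word $w$ over $V$ such that for all distinct $a,b\in V$, $ab\in E$ iff $a$ and $b$ alternate in $w$ (i.e. the subsequence of $w$ formed by all occurrences of $a$ and $b$ is $abab\cdots$ or $baba\cdots$). *)

From mathcomp Require Import all_boot.
Set Implicit Arguments. Unset Strict Implicit. Unset Printing Implicit Defensive.

Definition alternate (T : eqType) (w : seq T) (x y : T) : bool :=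
  sorted (fun a b => a != b) (filter (fun z => (z == x) || (z == y)) w).

Definition word_representable (T : finType) (E : rel T) : Prop :=
  exists w : seq T, (forall x : T, x \in w) /\
    (forall x y : T, x != y -> (E x y <-> alternate w x y)).

(* Vertices of M_III(k): inl i  (i : 'I_(k+1)) is the clique vertex c_(i+1);
   inr 0 is b; inr i (1 <= i <= k-1) is a_i. *)
Definition MIII_vertex (k : nat) : finType := ('I_k.+1 + 'I_k)%type.

Definition MIII_ci (k : nat) (i : 'I_k.+1) (a : 'I_k) : bool :=
  if nat_of_ord a == 0 then ((1 <= i <= k - 2) || (nat_of_ord i == k))
  else ((nat_of_ord i == a - 1) || (nat_of_ord i == nat_of_ord a)).

Definition MIII_adj (k : nat) : rel (MIII_vertex k) :=
  fun u v => match u, v with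
  | inl i, inl j => i != j
  | inl i, inr a => MIII_ci i a
  | inr a, inl i => MIII_ci i a
  | inr _, inr _ => false
  end.

From mathcomp Require Import all_boot zify.
Set Implicit Arguments. Unset Strict Implicit. Unset Printing Implicit Defensive.

(* Order a clique C of a word-representable graph by the first occurrences of
   its vertices in a representing word.  Since the vertices of C pairwise
   alternate, this order behaves like a cycle: the clique neighbours of any
   vertex form an arc of it, so a vertex adjacent to exactly two clique
   vertices, or to all but two, forces those two to be cyclically consecutive.
   In M_III(k) the vertices a_1, ..., a_(k-1) and b thus force c_1, ..., c_k
   to be cyclically consecutive in a closed cycle, which leaves no room for
   c_(k+1). *)

Section Alternation.
Variable T : eqType.
Implicit Types (w : seq T) (x y : T).

(* [x] and [y] alternate in [w], starting with [x]. *)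
Definition alt_from w x y :=
  forall p, count_mem y (take p w) <= count_mem x (take p w) <= (count_mem y (take p w)).+1.

Lemma alt_from_cons_head w x y :
  x != y -> alt_from (x :: w) x y <-> alt_from w y x.
Proof.
move=> nxy; split=> H p; last case: p => [//|p].
- by move: (H p.+1) => /=; rewrite eqxx (negbTE nxy); lia.
- by move: (H p) => /=; rewrite eqxx (negbTE nxy); lia.
Qed.

Lemma alt_from_cons_other w x y a :
  a != x -> a != y -> alt_from (a :: w) x y <-> alt_from w x y.
Proof.
move=> nax nay; split=> H p; last case: p => [//|p].
- by move: (H p.+1) => /=; rewrite (negbTE nax) (negbTE nay).
- by move: (H p) => /=; rewrite (negbTE nax) (negbTE nay).
Qed.

Lemma alt_from_cons_second w x y : x != y -> ~ alt_from (y :: w) x y.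
Proof. by move=> nxy /(_ 1) /=; rewrite take0 eqxx eq_sym (negbTE nxy). Qed.

Lemma filter_pred2C w x y :
  filter (fun z => (z == x) || (z == y)) w = filter (fun z => (z == y) || (z == x)) w.
Proof. by apply: eq_filter => z; rewrite orbC. Qed.

Lemma alt_fromE w x y : x != y ->
  alt_from w x y <-> path (fun a b => a != b) y (filter (fun z => (z == x) || (z == y)) w).
Proof.
elim: w x y => [|a w IH] x y nxy //=.
have [->|nax] := eqVneq a x.
  by rewrite /= alt_from_cons_head // eq_sym nxy /= IH 1?eq_sym // filter_pred2C.
have [->|nay] := eqVneq a y.
  by rewrite /= eqxx; split=> // /alt_from_cons_second-/(_ nxy).
by rewrite /= alt_from_cons_other // IH.
Qed.

Lemma alternateE w x y : x != y ->
  alternate w x y <-> alt_from w x y \/ alt_from w y x.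
Proof.
move=> nxy; rewrite /alternate alt_fromE // alt_fromE 1?eq_sym // (filter_pred2C w y x).
have := filter_all (fun z => (z == x) || (z == y)) w.
case: filter => [|h t] /=; first by split=> // _; left.
case/andP=> /orP[] /eqP-> _.
- by rewrite eq_sym nxy eqxx /=; split=> [|[] //]; left.
- by rewrite nxy eqxx /=; split=> [|[] //]; right.
Qed.

Lemma alt_from_index w x y : x != y -> y \in w -> alt_from w x y -> index x w < index y w.
Proof.
elim: w => [|a w IH] // nxy; rewrite inE /=.
have [->|nax] := eqVneq a x; first by rewrite (negbTE nxy).
have [->|nay] := eqVneq a y; first by move=> _ /alt_from_cons_second.
by move=> yw /(alt_from_cons_other _ nax nay) /(IH nxy yw).
Qed.

Lemma alt_from_square w a b c d :
  alt_from w a b -> alt_from w b c -> alt_from w c d -> alt_from w a d ->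
  alt_from w a c /\ alt_from w b d.
Proof. by move=> h1 h2 h3 h4; split=> p; move: (h1 p) (h2 p) (h3 p) (h4 p); lia. Qed.

End Alternation.

Section CyclicOrder.
Variables (T : eqType) (w : seq T) (C : pred T).
Hypothesis w_full : forall x, x \in w.

Local Notation pos x := (index x w).

Lemma pos_inj : injective (fun x => pos x).
Proof. by move=> x y e; rewrite -(nth_index x (w_full x)) /= e nth_index. Qed.

Lemma pos_neq x y : pos x != pos y -> x != y.
Proof. by apply: contraNneq => ->. Qed.

Lemma alt_from_pos x y : x != y -> alt_from w x y -> pos x < pos y.
Proof. by move=> nxy; apply: alt_from_index. Qed.

Lemma inside_neq u v z : pos u < pos z < pos v -> z != u /\ z != v.
Proof. by move=> b; split; apply: pos_neq; lia. Qed.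

Lemma outside_neq u v z : pos u < pos v -> (pos z < pos u) || (pos v < pos z) ->
  z != u /\ z != v.
Proof. by move=> uv o; split; apply: pos_neq; lia. Qed.

(* [v] follows [u] in the cyclic order of [C] by first occurrence in [w]. *)
Definition cyc_succ u v : Prop :=
  pos u < pos v /\ (forall z, C z -> ~~ (pos u < pos z < pos v)) \/
  pos v < pos u /\ (forall z, C z -> pos v <= pos z <= pos u).

Definition cyc_adj u v : Prop := cyc_succ u v \/ cyc_succ v u.

Lemma cyc_adjC u v : cyc_adj u v -> cyc_adj v u.
Proof. by case; [right | left]. Qed.

Lemma cyc_adj_intro u v : pos u < pos v ->
  (forall z1 z2, C z1 -> C z2 -> pos u < pos z1 < pos v ->
     (pos z2 < pos u) || (pos v < pos z2) -> False) ->
  cyc_adj u v.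
Proof.
move=> uv noz.
have [/hasP[z1 _ /andP[Cz1 b1]] | /hasPn nob] :=
  boolP (has (fun z => C z && (pos u < pos z < pos v)) w).
- right; right; split=> // z Cz; apply/negPn/negP => out.
  by apply: (noz z1 z Cz1 Cz b1); lia.
- by left; left; split=> // z Cz; have := nob z (w_full z); rewrite Cz.
Qed.

Lemma cyc_succ_fun u x y : C x -> C y -> cyc_succ u x -> cyc_succ u y -> x = y.
Proof.
move=> Cx Cy [[ux nx] | [xu ax]] [[uy ny] | [yu ay]]; apply: pos_inj.
- by move: (nx y Cy) (ny x Cx); lia.
- by move: (ay x Cx); lia.
- by move: (ax y Cy); lia.
- by move: (ax y Cy) (ay x Cx); lia.
Qed.

Lemma cyc_succ_inj u x y : C x -> C y -> cyc_succ x u -> cyc_succ y u -> x = y.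
Proof.
move=> Cx Cy [[xu nx] | [ux ax]] [[yu ny] | [uy ay]]; apply: pos_inj.
- by move: (nx y Cy) (ny x Cx); lia.
- by move: (ay x Cx); lia.
- by move: (ax y Cy); lia.
- by move: (ax y Cy) (ay x Cx); lia.
Qed.

Lemma cyc_adj_deg2 u p q r : C p -> C q -> C r -> p != q -> p != r -> q != r ->
  cyc_adj u p -> cyc_adj u q -> cyc_adj u r -> False.
Proof.
move=> Cp Cq Cr /eqP pq /eqP pr /eqP qr.
case=> [up|up] [uq|uq].
- by case: (pq (cyc_succ_fun Cp Cq up uq)).
- by case=> ur; [exact: pr (cyc_succ_fun Cp Cr up ur) | exact: qr (cyc_succ_inj Cq Cr uq ur)].
- by case=> ur; [exact: qr (cyc_succ_fun Cq Cr uq ur) | exact: pr (cyc_succ_inj Cp Cr up ur)].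
- by case: (pq (cyc_succ_inj Cp Cq up uq)).
Qed.

Lemma cyc_succ_exists c d : C c -> C d -> d != c ->
  exists2 j, C j /\ j != c & cyc_succ c j.
Proof.
move=> Cc Cd dc.
(* [j] minimises the distance from [c] to [j] going forward around the cycle. *)
pose key z := if pos c < pos z then pos z else pos z + size w.
have Pd : exists n, has (fun z => [&& C z, z != c & key z == n]) w.
  by exists (key d); apply/hasP; exists d => //; rewrite Cd dc eqxx.
case: (ex_minnP Pd) => _ /hasP[j _ /and3P[Cj jc /eqP <-]] min_j.
have key_min z : C z -> z != c -> key j <= key z.
  by move=> Cz zc; apply: min_j; apply/hasP; exists z => //; rewrite Cz zc eqxx.
exists j => //; rewrite /cyc_succ.
have [cj | jc'] := ltnP (pos c) (pos j).
- left; split=> // z Cz; apply/negP => /andP[cz zj].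
  have zc : z != c by apply: pos_neq; rewrite gtn_eqF.
  have := key_min z Cz zc.
  by rewrite /key cz cj leqNgt zj.
- have jc_lt : pos j < pos c.
    by rewrite ltn_neqAle jc' andbT; apply: contra jc => /eqP/pos_inj->.
  right; split=> // z Cz; have [-> | zc] := eqVneq z c; first by rewrite leqnn ltnW.
  have := key_min z Cz zc; rewrite /key [pos c < pos j]ltnNge jc' /=.
  by have := w_full z; rewrite -index_mem; case: ifP; lia.
Qed.

Lemma cyc_adj_cycle_full (f : nat -> T) n z : 2 < n ->
  (forall i j, i < n -> j < n -> i != j -> f i != f j) ->
  (forall i, i < n -> C (f i)) ->
  (forall i, i.+1 < n -> cyc_adj (f i) (f i.+1)) -> cyc_adj (f n.-1) (f 0) ->
  C z -> (forall i, i < n -> f i != z) ->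
  (forall y, C y -> y != z -> exists2 i, i < n & y = f i) -> False.
Proof.
move=> n_gt2 f_inj Cf path_f close_f Cz fz cover.
have n_pos : 0 < n by apply: ltn_trans n_gt2.
have [j [Cj jz] zj] := cyc_succ_exists Cz (Cf 0 n_pos) (fz 0 n_pos).
have [m mn fm] := cover _ Cj jz; rewrite {}fm in zj.
pose p := if m == 0 then n.-1 else m.-1.
pose q := if m == n.-1 then 0 else m.+1.
have [pn qn] : p < n /\ q < n by rewrite /p /q; split; case: ifP; lia.
have mp : cyc_adj (f m) (f p).
  rewrite /p; case: eqP => [-> | /eqP m0]; first exact: cyc_adjC.
  by apply: cyc_adjC; have := path_f m.-1; rewrite prednK ?lt0n //; apply.
have mq : cyc_adj (f m) (f q).
  rewrite /q; case: eqP => [-> // | /eqP mn1].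
  by apply: path_f; lia.
apply: (cyc_adj_deg2 (Cf p pn) (Cf q qn) Cz _ (fz p pn) (fz q qn) mp mq (or_intror zj)).
by apply: f_inj => //; rewrite /p /q; case: ifP; case: ifP; lia.
Qed.

Variable E : rel T.
Hypothesis w_rep : forall x y, x != y -> E x y <-> alternate w x y.
Hypothesis C_clique : {in C &, forall x y, x != y -> E x y}.

Lemma adj_alt_from x y : x != y -> E x y <-> alt_from w x y \/ alt_from w y x.
Proof. by move=> nxy; rewrite w_rep // alternateE. Qed.

Lemma clique_alt_from x y : C x -> C y -> pos x < pos y -> alt_from w x y.
Proof.
move=> Cx Cy lt; have nxy : x != y by apply: pos_neq; rewrite ltn_eqF.
case/(adj_alt_from nxy): (C_clique Cx Cy nxy) => // /alt_from_pos.
by rewrite eq_sym ltnNge ltnW // => /(_ nxy).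
Qed.

(* The clique neighbours of [x] form an arc of the cyclic order: if [x] sees
   [u] and [v], it sees everything on one of the two arcs between them. *)
Lemma adj_arc x u v z1 z2 : C u -> C v -> C z1 -> C z2 ->
  x != u -> x != v -> E x u -> E x v -> pos u < pos v ->
  pos u < pos z1 < pos v -> (pos z2 < pos u) || (pos v < pos z2) ->
  E x z1 \/ E x z2.
Proof.
move=> Cu Cv Cz1 Cz2 nxu nxv /(adj_alt_from nxu) xu /(adj_alt_from nxv) xv uv.
move=> /andP[uz1 z1v] o2.
have [nux nvx] : u != x /\ v != x by rewrite !(eq_sym _ x).
have adj_lt z : pos x < pos z -> alt_from w x z -> E x z.
  by move=> lt xz; apply/adj_alt_from; [apply: pos_neq; rewrite ltn_eqF | left].
have adj_gt z : pos z < pos x -> alt_from w z x -> E x z.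
  by move=> lt zx; apply/adj_alt_from; [apply: pos_neq; rewrite gtn_eqF | right].
case: xu => [xu|ux]; case: xv => [xv|vx].
- left; apply: adj_lt; first exact: ltn_trans (alt_from_pos nxu xu) uz1.
  exact: (alt_from_square xu (clique_alt_from Cu Cz1 uz1) (clique_alt_from Cz1 Cv z1v) xv).1.
- move: (alt_from_pos nxu xu) (alt_from_pos nvx vx) => xu' vx'.
  by have := ltn_trans (ltn_trans xu' uv) vx'; rewrite ltnn.
- have [ux' xv'] := (alt_from_pos nux ux, alt_from_pos nxv xv).
  right; case/orP: o2 => o2.
    apply: adj_gt; first exact: ltn_trans o2 ux'.
    exact: (alt_from_square (clique_alt_from Cz2 Cu o2) ux xv
                            (clique_alt_from Cz2 Cv (ltn_trans o2 uv))).1.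
  apply: adj_lt; first exact: ltn_trans xv' o2.
  exact: (alt_from_square ux xv (clique_alt_from Cv Cz2 o2)
                          (clique_alt_from Cu Cz2 (ltn_trans uv o2))).2.
- left; apply: adj_gt; first exact: ltn_trans z1v (alt_from_pos nvx vx).
  exact: (alt_from_square (clique_alt_from Cu Cz1 uz1) (clique_alt_from Cz1 Cv z1v) vx ux).2.
Qed.

Lemma cyc_adj_of_private_pair a u v : C u -> C v -> u != v ->
  a != u -> a != v -> E a u -> E a v ->
  (forall z, C z -> z != u -> z != v -> ~~ E a z) -> cyc_adj u v.
Proof.
move=> Cu Cv nuv; wlog uv : u v Cu Cv nuv / pos u < pos v.
  move=> hw; have : pos u != pos v by apply: contra_neq nuv; apply: pos_inj.
  rewrite neq_ltn => /orP[lt|gt]; first exact: hw.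
  move=> nau nav au av only; apply/cyc_adjC/hw => //; first by rewrite eq_sym.
  by move=> z Cz zv zu; apply: only.
move=> nau nav au av only; apply: cyc_adj_intro => // z1 z2 Cz1 Cz2 b1 o2.
have [z1u z1v] := inside_neq b1.
have [z2u z2v] := outside_neq uv o2.
by case: (adj_arc Cu Cv Cz1 Cz2 nau nav au av uv b1 o2); apply/negP/only.
Qed.

Lemma cyc_adj_of_common_nonneighbours b u v : C u -> C v -> u != v -> ~~ C b ->
  ~~ E b u -> ~~ E b v -> (forall z, C z -> z != u -> z != v -> E b z) -> cyc_adj u v.
Proof.
move=> Cu Cv nuv Cb; wlog uv : u v Cu Cv nuv / pos u < pos v.
  move=> hw; have : pos u != pos v by apply: contra_neq nuv; apply: pos_inj.
  rewrite neq_ltn => /orP[lt|gt]; first exact: hw.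
  move=> nbu nbv all_but; apply/cyc_adjC/hw => //; first by rewrite eq_sym.
  by move=> z Cz zv zu; apply: all_but.
move=> /negP nbu /negP nbv all_but; apply: cyc_adj_intro => // z1 z2 Cz1 Cz2 b1 o2.
have nb z : C z -> b != z by move=> Cz; apply: contraNneq Cb => ->.
have [z1u z1v] := inside_neq b1.
have [z2u z2v] := outside_neq uv o2.
have [bz1 bz2] := (all_but z1 Cz1 z1u z1v, all_but z2 Cz2 z2u z2v).
have [lt_u1 lt_1v] := andP b1.
(* One of [u], [v] lies strictly between [z1] and [z2], the other outside. *)
have [] : E b u \/ E b v; [case/orP: o2 => o2 | exact: nbu | exact: nbv].
- apply: (adj_arc Cz2 Cz1 Cu Cv (nb _ Cz2) (nb _ Cz1) bz2 bz1 (ltn_trans o2 lt_u1)).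
    by rewrite o2 lt_u1.
  by rewrite lt_1v orbT.
- apply/or_comm/(adj_arc Cz1 Cz2 Cv Cu (nb _ Cz1) (nb _ Cz2) bz1 bz2 (ltn_trans lt_1v o2)).
    by rewrite lt_1v o2.
  by rewrite lt_u1.
Qed.

End CyclicOrder.

Definition MIII_clique k : pred (MIII_vertex k) := fun v => if v is inl _ then true else false.

Lemma MIII_clique_adj k : {in @MIII_clique k &, forall x y, x != y -> MIII_adj x y}.
Proof. by case=> [i|i] [j|j]. Qed.

Section MIII.
Variable n : nat.

(* With k = n + 1: [MIII_c m] is c_(m+1), [MIII_a i] is a_i and [MIII_b] is b. *)
Definition MIII_c m : MIII_vertex n.+1 := inl (inord m).
Definition MIII_a i : MIII_vertex n.+1 := inr (inord i).
Definition MIII_b : MIII_vertex n.+1 := inr ord0.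

Lemma MIII_c_val (j : 'I_n.+2) : inl j = MIII_c j.
Proof. by rewrite /MIII_c inord_val. Qed.

Lemma MIII_c_eq m m' : m <= n.+1 -> m' <= n.+1 -> (MIII_c m == MIII_c m') = (m == m').
Proof.
move=> lem lem'; apply/eqP/eqP => [[] /(congr1 val) | -> //].
by rewrite /= !inordK.
Qed.

Lemma MIII_adj_a i m : 0 < i <= n -> m <= n.+1 ->
  MIII_adj (MIII_a i) (MIII_c m) = (m == i.-1) || (m == i).
Proof.
by move=> /andP[i_gt0 i_le] lem; rewrite /= /MIII_ci !inordK // gtn_eqF // subn1.
Qed.

Lemma MIII_adj_b m : m <= n.+1 -> MIII_adj MIII_b (MIII_c m) = (0 < m < n) || (m == n.+1).
Proof. by move=> lem; rewrite /= /MIII_ci inordK //; case: m lem => [|m] /=; lia. Qed.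

Variable w : seq (MIII_vertex n.+1).
Hypothesis w_full : forall x, x \in w.
Hypothesis w_rep : forall x y, x != y -> MIII_adj x y <-> alternate w x y.

Lemma MIII_cyc_adj_path i : i < n -> cyc_adj w (@MIII_clique _) (MIII_c i) (MIII_c i.+1).
Proof.
move=> lt_in; have [le_i le_i1] : i <= n.+1 /\ i.+1 <= n.+1 by split; lia.
apply: (cyc_adj_of_private_pair w_full w_rep (@MIII_clique_adj _) (a := MIII_a i.+1)) => //.
- by rewrite MIII_c_eq //; lia.
- by rewrite MIII_adj_a ?eqxx.
- by rewrite MIII_adj_a ?eqxx ?orbT.
case=> // j _; have le_j : j <= n.+1 := ltn_ord j.
rewrite MIII_c_val !MIII_c_eq // => ji ji1.
by rewrite MIII_adj_a // negb_or ji ji1.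
Qed.

Lemma MIII_cyc_adj_close : 0 < n -> cyc_adj w (@MIII_clique _) (MIII_c n) (MIII_c 0).
Proof.
move=> n_gt0.
apply: (cyc_adj_of_common_nonneighbours w_full w_rep (@MIII_clique_adj _) (b := MIII_b)) => //.
- by rewrite MIII_c_eq //; lia.
- by rewrite MIII_adj_b //; lia.
- by rewrite MIII_adj_b.
case=> // j _; have le_j : j <= n.+1 := ltn_ord j.
rewrite MIII_c_val !MIII_c_eq // => jn j0.
by rewrite MIII_adj_b //; lia.
Qed.

End MIII.

Theorem lemma11 (k : nat) : 4 <= k -> ~~ odd k ->
  ~ word_representable (@MIII_adj k).
Proof.
case: k => [//|n] k_ge4 _ [w [w_full w_rep]].
apply: (cyc_adj_cycle_full w_full (C := @MIII_clique n.+1) (f := @MIII_c n) (n := n.+1)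
          (z := MIII_c n n.+1)) => //.
- exact: ltnW k_ge4.
- by move=> i j lt_i lt_j; rewrite MIII_c_eq // ltnW.
- exact: MIII_cyc_adj_path w_full w_rep.
- by apply: MIII_cyc_adj_close w_full w_rep _; lia.
- by move=> i lt_i; rewrite MIII_c_eq ?(ltnW lt_i) // ltn_eqF.
case=> // j _; have le_j : j <= n.+1 := ltn_ord j.
rewrite MIII_c_val MIII_c_eq // => jn.
by exists (val j) => //; rewrite ltn_neqAle jn -ltnS.
Qed.
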